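(* Assume $\|\hat F'(y)-\hat F'(x)\|_F\le L_{\hat F}\|y-x\|$ for all $x,y\in\mathcal F$. Suppose that for Scheme 1 there is $x^*\in\mathcal L(\hat f_1(x_0))$ with $\hat F(x^* )=0$ and $\sigma_{\min}(\hat F'(x^* ))\ge\varsigma>0$. (i) If $\varsigma>\frac{2L_{\hat F}}{\alpha}$ for some fixed $\alpha\in(0,1)$, then for every $k\in\mathbb Z_+$, every $\varepsilon_k\ge0$, whenever $\|x_k-x^*\|<\frac{\varsigma}{L_{\hat F}}-\frac2\alpha$ and $$0<\tau_k\le\frac{\Big(\big(\alpha(\varsigma-L_{\hat F}\|x_k-x^*\|)-\frac{3L_{\hat F}}{2}\big)^2-\frac{L_{\hat F}^2}{4}\Big)\|x_k-x^*\|^4}{\|x_k-x^*\|^2L_k+2\varepsilon_k},$$ we have $x_{k+1}\in\mathcal L(\hat f_1(x_0))$ and $$\|x_{k+1}-x^*\|\le\frac{\frac{3L_{\hat F}\|x_k-x^*\|^2}{2}+\sqrt{\|x_k-x^*\|^2\big(\tau_kL_k+\frac{L_{\hat F}^2\|x_k-x^*\|^2}{4}\big)+2\tau_k\varepsilon_k}}{\varsigma-L_{\hat F}\|x_k-x^*\|}\le\alpha\|x_k-x^*\|^2.$$ (ii) If no such $\alpha\in(0,1)$ exists, then in Scheme 1 with $\tau_k=c_1\|x_k-x^*\|^2$ ($c_1>0$) and $\varepsilon_k=c_2\|x_k-x^*\|^2$ ($c_2\ge0$), whenever $\|x_k-x^*\|\le\varsigma\big/\big(\frac{5L_{\hat F}}{2}+\sqrt{2c_1L_{\hat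 F}+\frac{L_{\hat F}^2}{4}+2c_1c_2}\big)$, the middle expression above is at most $\|x_k-x^*\|$ (so $\|x_{k+1}-x^*\|\le\|x_k-x^*\|$) and $x_{k+1}\in\mathcal L(\hat f_1(x_0))$.
   Context: Let $F:\mathbb R^n\to\mathbb R^m$ be smooth, $\hat F=\frac1{\sqrt m}F$ with Jacobian $\hat F'(x)$; Euclidean norms, spectral norm for matrices, $\|\cdot\|_F$ Frobenius norm; $\sigma_{\min}$ is the minimal singular value. $\hat f_1(x)=\|\hat F(x)\|$, $\phi(x,y)=\|\hat F(x)+\hat F'(x)(y-x)\|$, $\psi_{x,L,\tau}(y)=\frac\tau2+\frac{\phi(x,y)^2}{2\tau}+\frac L2\|y-x\|^2$, $T_{L,\tau}(x)=\arg\min_y\psi_{x,L,\tau}(y)$. $\mathcal F$ is closed convex with nonempty interior, $\mathcal L(v)=\{x:\hat f_1(x)\le v\}$, and $\mathcal L(\hat f_1(x_0))\subseteq\mathcal F$ with the generated sequence in $\mathcal F$. Scheme 1 (input $x_0$, a rule choosing $\varepsilon_k\ge0,\tau_k>0$, $L\in(0,L_{\hat F}]$, $L_0=L$): for $k=0,1,\dots$: choose $\tau_k,\varepsilon_k$; compute $x_{k+1}$ with $\psi_{x_k,L_k,\tau_k}(x_{k+1})-\psi_{x_k,L_k,\tau_k}(T_{L_k,\tau_k}(x_k))\le\varepsilon_k$ and $\hat f_1(x_k)\ge\psi_{x_k,L_k,\tau_k}(x_{k+1})$; if $\hat f_1(x_{k+1})>\psi_{x_k,L_k,\tau_k}(x_{k+1})$,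 set $L_k:=\min\{2L_k,2L_{\hat F}\}$ and repeat the iteration; otherwise $L_{k+1}=\max\{L_k/2,L\}$. *)

From HB Require Import structures.
From mathcomp Require Import all_boot all_order all_algebra.
From mathcomp Require Import all_classical all_reals all_analysis.
Set Implicit Arguments. Unset Strict Implicit. Unset Printing Implicit Defensive.
Import Order.TTheory GRing.Theory Num.Theory.
Import numFieldNormedType.Exports.
Local Open Scope classical_set_scope.
Local Open Scope ring_scope.

Section Defs.
Variable R : realType.

Definition enorm (p q : nat) (A : 'M[R]_(p, q)) : R :=
  Num.sqrt (\sum_(i < p) \sum_(j < q) A i j ^+ 2).

(* minimal singular value of the m x n matrix M (given through its transpose
   A = M^T : 'M_(n,m), acting on row vectors: v *m A = (M v^T)^T):
   sigma_min(M) = inf_{|v| = 1} |M v|. *)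
Definition sigma_min (p q : nat) (A : 'M[R]_(p, q)) : R :=
  inf [set enorm (v *m A) | v in [set v : 'rV[R]_p | enorm v = 1]].

Fixpoint Ck (n k : nat) (f : 'rV[R]_n -> R) : Prop :=
  match k with
  | 0 => continuous f
  | k'.+1 => (forall x, differentiable f x) /\
             forall j : 'I_n, Ck k' (fun x => 'D_(delta_mx 0 j) f x)
  end.

Definition smooth (n m : nat) (F : 'rV[R]_n -> 'rV[R]_m) : Prop :=
  forall (i : 'I_m) (k : nat), Ck k (fun x => F x 0 i).

Section Scheme.
Variables (n m : nat) (F : 'rV[R]_n -> 'rV[R]_m).

(* \hat F = F / sqrt m and its Jacobian; the library Jacobian 'J F x : 'M_(n,m)
   is the transpose of the usual m x n Jacobian (row-vector convention). *)
Definition Fhat (x : 'rV[R]_n) : 'rV[R]_m := (Num.sqrt (m%:R))^-1 *: F x.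
Definition Jhat (x : 'rV[R]_n) : 'M[R]_(n, m) := (Num.sqrt (m%:R))^-1 *: 'J F x.

Definition f1hat (x : 'rV[R]_n) : R := enorm (Fhat x).
Definition phi (x y : 'rV[R]_n) : R := enorm (Fhat x + (y - x) *m Jhat x).
Definition psi (x : 'rV[R]_n) (L tau : R) (y : 'rV[R]_n) : R :=
  tau / 2 + phi x y ^+ 2 / (2 * tau) + L / 2 * enorm (y - x) ^+ 2.
Definition is_argmin (f : 'rV[R]_n -> R) (t : 'rV[R]_n) : Prop :=
  forall y, f t <= f y.
Definition level (v : R) : set 'rV[R]_n := [set x | f1hat x <= v].

(* starting value of L_k in the inner loop of iteration k *)
Definition Lstart (L : R) (Lk : nat -> R) (k : nat) : R :=
  match k with 0 => L | k'.+1 => Num.max (Lk k' / 2) L end.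

(* A run of Scheme 1: x k are the iterates, Lk k the accepted value of L_k,
   tau k, eps k the chosen parameters (at acceptance). *)
Definition Scheme1 (LF L : R) (x0 : 'rV[R]_n) (x : nat -> 'rV[R]_n)
  (Lk tau eps : nat -> R) : Prop :=
  x 0%N = x0 /\
  forall k : nat,
    [/\ 0 <= eps k /\ 0 < tau k,
        (exists j : nat, Lk k = Num.min (2 ^+ j * Lstart L Lk k) (2 * LF)),
        (exists t, is_argmin (psi (x k) (Lk k) (tau k)) t /\
           psi (x k) (Lk k) (tau k) (x k.+1) - psi (x k) (Lk k) (tau k) t <= eps k),
        psi (x k) (Lk k) (tau k) (x k.+1) <= f1hat (x k) &
        f1hat (x k.+1) <= psi (x k) (Lk k) (tau k) (x k.+1)].
End Scheme.
End Defs.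

From HB Require Import structures.
From mathcomp Require Import all_boot all_order all_algebra.
From mathcomp Require Import all_classical all_reals all_analysis.
From mathcomp Require Import ring lra.
Import Order.TTheory GRing.Theory Num.Theory.
Import numFieldNormedType.Exports.
Local Open Scope classical_set_scope.
Local Open Scope ring_scope.
Set Implicit Arguments. Unset Strict Implicit. Unset Printing Implicit Defensive.

(** Fix an iterate a = x_k and write r = |a - xs| for the distance to the root xs.  Since
    the Jacobian is L_F-Lipschitz along the segment [a, xs], the linearised residual at the
    root is small: phi(a, xs) <= L_F r^2 / 2.  Comparing the inexact minimiser x_{k+1} of
    psi with the candidate xs bounds phi(a, x_{k+1}) by the square root of the statement.
    The smallest singular value moves by at most L_F r between xs and a, so
    (vs - L_F r) |x_{k+1} - xs| <= |(x_{k+1} - xs) J(a)| <= phi(a, x_{k+1}) + phi(a, xs).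
    Both parts are arithmetic consequences of this one-step inequality, and x_{k+1} stays
    in the level set because f(x_{k+1}) <= psi(x_{k+1}) <= f(x_k). *)

Section SquareRoot.
Variable R : rcfType.

Lemma sqrtr_le (a b : R) : 0 <= b -> a <= b ^+ 2 -> Num.sqrt a <= b.
Proof. by move=> b0 ab; rewrite -(ger0_norm b0) -sqrtr_sqr ler_wsqrtr. Qed.

Lemma ler_of_sqr (a b : R) : 0 <= b -> a ^+ 2 <= b ^+ 2 -> a <= b.
Proof. by move=> b0 ab; rewrite (le_trans (ler_norm a)) // -sqrtr_sqr sqrtr_le. Qed.

End SquareRoot.

Section EuclideanNorm.
Variable R : realType.

Lemma cauchy_schwarz_sum (I : finType) (a b : I -> R) :
  (\sum_i a i * b i) ^+ 2 <= (\sum_i a i ^+ 2) * (\sum_i b i ^+ 2).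
Proof.
set A := \sum_i a i ^+ 2; set B := \sum_i b i ^+ 2; set C := \sum_i a i * b i.
have B0 : 0 <= B by apply: sumr_ge0 => i _; exact: sqr_ge0.
have lagrange : \sum_i (B * a i - C * b i) ^+ 2 = B * (A * B - C ^+ 2).
  transitivity (\sum_i (B ^+ 2 * a i ^+ 2 - (2 * B * C) * (a i * b i) + C ^+ 2 * b i ^+ 2)).
    by apply: eq_bigr => i _; ring.
  rewrite big_split /= sumrB -!mulr_sumr -/A -/B -/C; ring.
have BABC0 : 0 <= B * (A * B - C ^+ 2).
  by rewrite -lagrange; apply: sumr_ge0 => i _; exact: sqr_ge0.
have [Bpos|] := ltrP 0 B; first by rewrite -subr_ge0 -(pmulr_rge0 _ Bpos).
rewrite le_eqVlt ltNge B0 orbF => /eqP B_eq0.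
have b_eq0 i : b i = 0.
  apply/eqP; rewrite -sqrf_eq0; apply/eqP; move/eqP: B_eq0.
  by rewrite psumr_eq0 => [/allP/(_ i (mem_index_enum i))/implyP/(_ isT)/eqP|j _];
    [|exact: sqr_ge0].
have -> : C = 0 by rewrite /C big1 // => i _; rewrite b_eq0 mulr0.
by rewrite B_eq0 expr0n /= mulr0.
Qed.

Lemma enorm_ge0 p q (A : 'M[R]_(p, q)) : 0 <= enorm A.
Proof. exact: sqrtr_ge0. Qed.

Lemma enorm_sqrE p q (A : 'M[R]_(p, q)) :
  enorm A ^+ 2 = \sum_i \sum_j A i j ^+ 2.
Proof.
apply: sqr_sqrtr.
by apply: sumr_ge0 => i _; apply: sumr_ge0 => j _; exact: sqr_ge0.
Qed.

Lemma enorm_sqr_pair p q (A : 'M[R]_(p, q)) :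
  enorm A ^+ 2 = \sum_(u : 'I_p * 'I_q) A u.1 u.2 ^+ 2.
Proof. by rewrite enorm_sqrE pair_bigA. Qed.

Lemma enorm_rowE p (v : 'rV[R]_p) : enorm v ^+ 2 = \sum_j v 0 j ^+ 2.
Proof. by rewrite enorm_sqrE big_ord1. Qed.

Lemma enorm_le_sqr p q (A : 'M[R]_(p, q)) (c : R) :
  0 <= c -> \sum_i \sum_j A i j ^+ 2 <= c ^+ 2 -> enorm A <= c.
Proof. by move=> c0 h; rewrite ler_of_sqr // enorm_sqrE. Qed.

Lemma dotmx_le p (u v : 'rV[R]_p) : \sum_j u 0 j * v 0 j <= enorm u * enorm v.
Proof.
rewrite ler_of_sqr ?mulr_ge0 ?enorm_ge0 // exprMn !enorm_rowE.
exact: cauchy_schwarz_sum.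
Qed.

Lemma enormD p q (A B : 'M[R]_(p, q)) : enorm (A + B) <= enorm A + enorm B.
Proof.
apply: enorm_le_sqr; first by rewrite addr_ge0 ?enorm_ge0.
have cs := cauchy_schwarz_sum (fun u : 'I_p * 'I_q => A u.1 u.2) (fun u => B u.1 u.2).
rewrite /= -!enorm_sqr_pair -exprMn in cs.
have AB := ler_of_sqr (mulr_ge0 (enorm_ge0 A) (enorm_ge0 B)) cs.
rewrite pair_bigA; under eq_bigr do rewrite mxE sqrrD.
rewrite !big_split /= -!enorm_sqr_pair sqrrD; lra.
Qed.

Lemma enormZ p q (c : R) (A : 'M[R]_(p, q)) : enorm (c *: A) = `|c| * enorm A.
Proof.
rewrite -[LHS]ger0_norm ?enorm_ge0 // -sqrtr_sqr enorm_sqr_pair.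
under eq_bigr do rewrite mxE exprMn.
rewrite -mulr_sumr -enorm_sqr_pair sqrtrM ?sqr_ge0 // !sqrtr_sqr.
by rewrite [`|enorm A|]ger0_norm ?enorm_ge0.
Qed.

Lemma enormN p q (A : 'M[R]_(p, q)) : enorm (- A) = enorm A.
Proof. by rewrite -scaleN1r enormZ normrN normr1 mul1r. Qed.

Lemma enormB p q (A B : 'M[R]_(p, q)) : enorm (A - B) = enorm (B - A).
Proof. by rewrite -enormN opprB. Qed.

Lemma enorm_mulmx p q (v : 'rV[R]_p) (A : 'M[R]_(p, q)) :
  enorm (v *m A) <= enorm v * enorm A.
Proof.
apply: enorm_le_sqr; first by rewrite mulr_ge0 ?enorm_ge0.
rewrite exprMn enorm_rowE enorm_sqrE big_ord1 /= exchange_big mulr_sumr.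
by apply: ler_sum => j _; rewrite mxE; exact: cauchy_schwarz_sum.
Qed.

End EuclideanNorm.

Section SingularValue.
Variable R : realType.

Lemma sigma_min_le p q (A : 'M[R]_(p, q)) (v : 'rV[R]_p) :
  enorm v = 1 -> sigma_min A <= enorm (v *m A).
Proof.
move=> v1; apply: ge_inf; last by exists v.
by exists 0 => _ [w _ <-]; exact: enorm_ge0.
Qed.

Lemma sigma_min_mulmx p q (A : 'M[R]_(p, q)) (u : 'rV[R]_p) :
  sigma_min A * enorm u <= enorm (u *m A).
Proof.
have [u0|u_neq0] := eqVneq (enorm u) 0; first by rewrite u0 mulr0 enorm_ge0.
have u_gt0 : 0 < enorm u by rewrite lt_neqAle eq_sym u_neq0 enorm_ge0.
have v1 : enorm ((enorm u)^-1 *: u) = 1.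
  by rewrite enormZ ger0_norm ?invr_ge0 ?enorm_ge0 // mulVf.
rewrite -ler_pdivlMr // -[u *m A](scale1r) -(divff u_neq0) -scalerA scalemxAl.
by rewrite enormZ ger0_norm ?enorm_ge0 // [enorm u * _]mulrC mulfK // sigma_min_le.
Qed.

Lemma sigma_min_perturb p q (A B : 'M[R]_(p, q)) (u : 'rV[R]_p) (s : R) :
  s <= sigma_min A -> (s - enorm (B - A)) * enorm u <= enorm (u *m B).
Proof.
move=> sA; have uA := sigma_min_mulmx A u.
have uBA : enorm (u *m A) <= enorm (u *m B) + enorm u * enorm (B - A).
  rewrite -[u *m A](subrK (u *m B)) -mulmxBr addrC enormB.
  by apply: (le_trans (enormD _ _)); rewrite lerD2l enorm_mulmx.
have := ler_wpM2r (enorm_ge0 u) sA; nra.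
Qed.

End SingularValue.

Section Linearization.
Variable R : realType.

Lemma is_derive_mx_coord (V : normedModType R) p q (M : V -> 'M[R]_(p, q))
    (t v : V) i j :
  derivable M t v -> is_derive t v (fun y => M y i j) ('D_v M t i j).
Proof.
move=> dM; rewrite derive_mx // mxE.
exact/derivableP/(derivable_mxP M t v).1.
Qed.

Lemma is_derive_line (V W : normedModType R) (f : V -> W) (a d : V) (t : R) :
  derivable f (t *: d + a) d ->
  is_derive t 1 (fun s : R => f (s *: d + a)) ('D_d f (t *: d + a)).
Proof.
have quotE : (fun h : R => h^-1 *: (f ((h *: 1 + t) *: d + a) - f (t *: d + a)))
           = (fun h : R => h^-1 *: (f (h *: d + (t *: d + a)) - f (t *: d + a))).
  by apply/funext => h; rewrite -[h *: 1]/(h * 1) mulr1 scalerDl addrA.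
by move=> df; apply: DeriveDef; rewrite /derivable /derive /= quotE.
Qed.

Lemma increment_le_affine_derive (h dh : R -> R) (c C : R) :
  (forall t : R, is_derive t (1 : R) h (dh t)) ->
  (forall t, 0 <= t -> t <= 1 -> dh t <= c + C * t) ->
  h 1 - h 0 <= c + C / 2.
Proof.
move=> Dh dh_le.
pose g := h - c \*: id - (C / 2) \*: id ^+ 2.
have Dg (t : R) : is_derive t (1 : R) g (dh t - c - C * t).
  by apply: is_derive_eq; rewrite !scaler1 expr1 -[_ *: _]/(_ * _); field.
have gc : {within `[0, 1], continuous g}.
  by apply: derivable_within_continuous => t _; have [] := Dg t.
have [s /andP[s0 s1] gE] := MVT ltr01 (fun t _ => Dg t) gc.
have gE' t : g t = h t - c * t - C / 2 * t ^+ 2 by [].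
rewrite !bnd_simp in s0 s1; rewrite !gE' in gE.
have := dh_le s (ltW s0) (ltW s1); nra.
Qed.

Lemma linearization_error n m (G : 'rV[R]_n -> 'rV[R]_m)
    (J : 'rV[R]_n -> 'M[R]_(n, m)) (a d : 'rV[R]_n) (K : R) :
  (forall p, differentiable G p) -> (forall p v, 'D_v G p = v *m J p) ->
  (forall t, 0 <= t -> t <= 1 -> enorm (J (t *: d + a) - J a) <= K * t * enorm d) ->
  enorm (G (d + a) - G a - d *m J a) <= K * enorm d ^+ 2 / 2.
Proof.
move=> dG DG J_lip.
(* With h s = <u, G (s d + a)>, the Lipschitz bound gives
   h' s <= <u, d J a> + K s |u| |d|^2, while h 1 - h 0 - <u, d J a> = |u|^2. *)
set u := G (d + a) - G a - d *m J a.
pose M s := G (s *: d + a).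
have DM (t : R) : is_derive t (1 : R) M (d *m J (t *: d + a)).
  by rewrite -DG; apply: is_derive_line; exact: diff_derivable.
pose h := \sum_(j < m) u 0 j \*: (fun s => M s 0 j).
have hE s : h s = \sum_j u 0 j * M s 0 j by rewrite /h fct_sumE.
have Dh (t : R) : is_derive t (1 : R) h (\sum_j u 0 j * (d *m J (t *: d + a)) 0 j).
  apply: is_derive_sum => j; apply: is_deriveZ.
  have [dM _] := DM t.
  by have := is_derive_mx_coord 0 j dM; rewrite derive_val.
set c := \sum_j u 0 j * (d *m J a) 0 j.
have incr : h 1 - h 0 <= c + enorm u * K * enorm d ^+ 2 / 2.
  apply: (increment_le_affine_derive Dh) => t t0 t1.
  have -> : \sum_j u 0 j * (d *m J (t *: d + a)) 0 j
          = c + \sum_j u 0 j * (d *m (J (t *: d + a) - J a)) 0 j.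
    rewrite /c -big_split /=; apply: eq_bigr => j _.
    by rewrite mulmxBr !mxE; ring.
  rewrite lerD2l; apply: (le_trans (dotmx_le _ _)).
  rewrite -!mulrA ler_wpM2l ?enorm_ge0 //; apply: (le_trans (enorm_mulmx _ _)).
  have := J_lip t t0 t1; have := enorm_ge0 d; nra.
have u_sqr : h 1 - h 0 - c = enorm u ^+ 2.
  rewrite !hE enorm_rowE /c -!sumrB; apply: eq_bigr => j _.
  by rewrite /M scale1r scale0r add0r /u !mxE; ring.
have bound_ge0 : 0 <= K * enorm d ^+ 2 / 2.
  have := le_trans (enorm_ge0 _) (J_lip 1 ler01 (lexx 1)).
  rewrite mulr1 => Kd_ge0; have := enorm_ge0 d; nra.
have u_le : enorm u ^+ 2 <= enorm u * (K * enorm d ^+ 2 / 2).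
  by rewrite -u_sqr; move: incr; rewrite !mulrA; lra.
have := enorm_ge0 u; nra.
Qed.

End Linearization.

Section Rates.
Variable R : rcfType.

Definition model_bound (LF tau Lk eps r : R) : R :=
  Num.sqrt (r ^+ 2 * (tau * Lk + LF ^+ 2 * r ^+ 2 / 4) + 2 * tau * eps).

Definition rate_bound (LF vs tau Lk eps r : R) : R :=
  (3 * LF * r ^+ 2 / 2 + model_bound LF tau Lk eps r) / (vs - LF * r).

Lemma le_rate_bound (LF vs tau Lk eps r r' : R) :
  0 <= LF -> 0 < vs - LF * r ->
  r' * (vs - LF * r) <= LF * r ^+ 2 / 2 + model_bound LF tau Lk eps r ->
  r' <= rate_bound LF vs tau Lk eps r.
Proof.
move=> LF0 D0 step; rewrite ler_pdivlMr //; apply: le_trans step _.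
have := sqr_ge0 r; rewrite lerD2r; nra.
Qed.

Lemma rate_bound_le_quadratic (LF vs alpha tau Lk eps r : R) :
  0 < LF -> 0 < alpha -> 0 <= r -> 0 < tau -> 0 <= Lk -> 0 <= eps ->
  r < vs / LF - 2 / alpha ->
  tau <= (((alpha * (vs - LF * r) - 3 * LF / 2) ^+ 2 - LF ^+ 2 / 4) * r ^+ 4)
           / (r ^+ 2 * Lk + 2 * eps) ->
  0 < vs - LF * r /\ rate_bound LF vs tau Lk eps r <= alpha * r ^+ 2.
Proof.
move=> LF0 a0 r0 tau0 Lk0 eps0 r_lt tau_le.
set D := vs - LF * r; set Q := alpha * D - 3 * LF / 2; set den := r ^+ 2 * Lk + 2 * eps.
have aD : 2 * LF < alpha * D.
  rewrite -subr_gt0 in r_lt.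
  have := mulr_gt0 (mulr_gt0 LF0 a0) r_lt.
  have -> : LF * alpha * (vs / LF - 2 / alpha - r) = alpha * D - 2 * LF.
    by rewrite /D; field; rewrite !gt_eqF.
  by rewrite subr_gt0.
have D0 : 0 < D by rewrite -(pmulr_rgt0 _ a0); lra.
have den0 : 0 < den.
  rewrite lt_neqAle eq_sym addr_ge0 ?mulr_ge0 ?sqr_ge0 // andbT.
  by apply/eqP => den_eq0; move: tau_le; rewrite -/den den_eq0 invr0 mulr0; lra.
have tau_den : tau * den <= (Q ^+ 2 - LF ^+ 2 / 4) * r ^+ 4 by rewrite -ler_pdivlMr.
have sqrt_le : model_bound LF tau Lk eps r <= Q * r ^+ 2.
  apply: sqrtr_le; first by rewrite mulr_ge0 ?sqr_ge0 // /Q; lra.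
  have -> : r ^+ 2 * (tau * Lk + LF ^+ 2 * r ^+ 2 / 4) + 2 * tau * eps
      = tau * den + LF ^+ 2 / 4 * r ^+ 4 by rewrite /den; ring.
  have -> : (Q * r ^+ 2) ^+ 2 = (Q ^+ 2 - LF ^+ 2 / 4) * r ^+ 4 + LF ^+ 2 / 4 * r ^+ 4.
    by ring.
  by rewrite lerD2r.
split=> //; rewrite ler_pdivrMr //.
have -> : alpha * r ^+ 2 * D = 3 * LF * r ^+ 2 / 2 + Q * r ^+ 2 by rewrite /Q; ring.
by rewrite lerD2l.
Qed.

Lemma rate_bound_le_linear (LF vs c1 c2 Lk r : R) :
  0 < LF -> 0 < c1 -> 0 <= c2 -> 0 < r -> Lk <= 2 * LF ->
  r <= vs / (5 * LF / 2 + Num.sqrt (2 * c1 * LF + LF ^+ 2 / 4 + 2 * c1 * c2)) ->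
  0 < vs - LF * r /\ rate_bound LF vs (c1 * r ^+ 2) Lk (c2 * r ^+ 2) r <= r.
Proof.
move=> LF0 c1_0 c2_0 r0 Lk_le r_le.
set T := 2 * c1 * LF + LF ^+ 2 / 4 + 2 * c1 * c2; set D := vs - LF * r.
have T0 : 0 <= T.
  by rewrite /T !addr_ge0 ?mulr_ge0 ?divr_ge0 ?sqr_ge0 // ltW.
have sT0 := sqrtr_ge0 T.
have gap : r * (3 * LF / 2 + Num.sqrt T) <= D.
  rewrite ler_pdivlMr in r_le; last by lra.
  by move: r_le; rewrite /D; lra.
have D0 : 0 < D by apply: lt_le_trans gap; rewrite mulr_gt0 //; lra.
have model_le : model_bound LF (c1 * r ^+ 2) Lk (c2 * r ^+ 2) r <= r ^+ 2 * Num.sqrt T.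
  apply: sqrtr_le; first by rewrite mulr_ge0 ?sqr_ge0.
  rewrite exprMn sqr_sqrtr //.
  have -> : r ^+ 2 * (c1 * r ^+ 2 * Lk + LF ^+ 2 * r ^+ 2 / 4)
            + 2 * (c1 * r ^+ 2) * (c2 * r ^+ 2)
      = (r ^+ 2) ^+ 2 * (c1 * Lk + LF ^+ 2 / 4 + 2 * c1 * c2) by ring.
  rewrite ler_wpM2l ?sqr_ge0 // /T.
  by have := ler_wpM2l (ltW c1_0) Lk_le; lra.
split=> //; rewrite ler_pdivrMr //.
apply: le_trans (ler_wpM2l (ltW r0) gap).
have -> : r * (r * (3 * LF / 2 + Num.sqrt T)) = 3 * LF * r ^+ 2 / 2 + r ^+ 2 * Num.sqrt T.
  by ring.
by rewrite lerD2l.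
Qed.

End Rates.

Lemma smooth_differentiable (R : realType) n m (F : 'rV[R]_n -> 'rV[R]_m) :
  smooth F -> forall p, differentiable F p.
Proof.
move=> sF p; have -> : F = \sum_(j < m) (fun y => F y 0 j *: delta_mx 0 j).
  by rewrite fct_sumE; apply/funext => y; rewrite [LHS]row_sum_delta.
by apply: differentiable_sum => j; apply: differentiableZl; have [] := sF j 1%N.
Qed.

Lemma convex_set_line (R : realType) n (S : set 'rV[R]_n) (a b : 'rV[R]_n) (t : R) :
  convex_set S -> S a -> S b -> 0 <= t -> t <= 1 -> S (t *: (b - a) + a).
Proof.
move=> cS Sa Sb t0 t1.
have := cS b a (Itv01 t0 t1) (mem_set Sb) (mem_set Sa); rewrite inE.
congr S; rewrite -[LHS]/(t *: b + (1 - t) *: a).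
by rewrite scalerBr scalerBl scale1r addrA addrAC.
Qed.

Section OneStep.
Variables (R : realType) (n m : nat) (F : 'rV[R]_n -> 'rV[R]_m).
Variables (S : set 'rV[R]_n) (LF : R).
Hypotheses (sF : smooth F) (cS : convex_set S).
Hypothesis J_lip :
  forall y z, S y -> S z -> enorm (Jhat F z - Jhat F y) <= LF * enorm (z - y).

Let FhatE : Fhat F = (Num.sqrt m%:R)^-1 \*: F. Proof. by []. Qed.

Lemma Fhat_differentiable p : differentiable (Fhat F) p.
Proof. by rewrite FhatE; apply: differentiableZ; exact: smooth_differentiable. Qed.

Lemma derive_Fhat p v : 'D_v (Fhat F) p = v *m Jhat F p.
Proof.
have dF := smooth_differentiable sF p.
rewrite FhatE deriveZ; last exact: diff_derivable.
by rewrite deriveEjacobian // /Jhat scalemxAr.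
Qed.

Lemma phi_root_le a xs :
  S a -> S xs -> Fhat F xs = 0 -> phi F a xs <= LF * enorm (a - xs) ^+ 2 / 2.
Proof.
move=> Sa Sxs Fxs0.
have J_lip_line t : 0 <= t -> t <= 1 ->
    enorm (Jhat F (t *: (xs - a) + a) - Jhat F a) <= LF * t * enorm (xs - a).
  move=> t0 t1; apply: le_trans (J_lip Sa (convex_set_line cS Sa Sxs t0 t1)) _.
  by rewrite addrK enormZ ger0_norm // mulrA.
have := linearization_error Fhat_differentiable derive_Fhat J_lip_line.
by rewrite subrK Fxs0 sub0r -opprD enormN [enorm (xs - a)]enormB.
Qed.

Lemma phi_sqr_le_inexact_argmin a y z t (Lk tau eps : R) :
  0 <= Lk -> 0 < tau -> is_argmin (psi F a Lk tau) t ->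
  psi F a Lk tau y - psi F a Lk tau t <= eps ->
  phi F a y ^+ 2 <= phi F a z ^+ 2 + tau * Lk * enorm (z - a) ^+ 2 + 2 * tau * eps.
Proof.
move=> Lk0 tau0 t_min y_eps.
have psi_le : psi F a Lk tau y <= psi F a Lk tau z + eps by have := t_min z; lra.
rewrite -subr_ge0.
have -> : phi F a z ^+ 2 + tau * Lk * enorm (z - a) ^+ 2 + 2 * tau * eps - phi F a y ^+ 2
    = 2 * tau * (psi F a Lk tau z + eps - psi F a Lk tau y)
      + tau * Lk * enorm (y - a) ^+ 2.
  by rewrite /psi; field; rewrite gt_eqF.
by rewrite addr_ge0 ?mulr_ge0 ?subr_ge0 ?enorm_ge0 ?(ltW tau0).
Qed.

Lemma mulmx_Jhat_le_phi a y z :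
  enorm ((y - z) *m Jhat F a) <= phi F a y + phi F a z.
Proof.
have -> : (y - z) *m Jhat F a
    = (Fhat F a + (y - a) *m Jhat F a) - (Fhat F a + (z - a) *m Jhat F a).
  by rewrite opprD addrACA subrr add0r -mulmxBl opprB addrA subrK.
by apply: (le_trans (enormD _ _)); rewrite enormN.
Qed.

Lemma phi_le_model_bound a xs y t (Lk tau eps : R) :
  S a -> S xs -> Fhat F xs = 0 -> 0 <= Lk -> 0 < tau ->
  is_argmin (psi F a Lk tau) t -> psi F a Lk tau y - psi F a Lk tau t <= eps ->
  phi F a y <= model_bound LF tau Lk eps (enorm (a - xs)).
Proof.
move=> Sa Sxs Fxs0 Lk0 tau0 t_min y_eps; set r := enorm (a - xs).
have phi_xs := phi_root_le Sa Sxs Fxs0; have phi_xs0 : 0 <= phi F a xs := enorm_ge0 _.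
rewrite -[phi F a y]ger0_norm ?enorm_ge0 // -sqrtr_sqr ler_wsqrtr //.
apply: le_trans (phi_sqr_le_inexact_argmin xs Lk0 tau0 t_min y_eps) _.
have := ler_pM phi_xs0 phi_xs0 phi_xs phi_xs.
by rewrite [enorm (xs - a)]enormB -/r -!expr2; lra.
Qed.

Lemma dist_root_step_le a xs y t (Lk tau eps vs : R) :
  S a -> S xs -> Fhat F xs = 0 -> vs <= sigma_min (Jhat F xs) -> 0 <= Lk -> 0 < tau ->
  is_argmin (psi F a Lk tau) t -> psi F a Lk tau y - psi F a Lk tau t <= eps ->
  enorm (y - xs) * (vs - LF * enorm (a - xs)) <=
    LF * enorm (a - xs) ^+ 2 / 2 + model_bound LF tau Lk eps (enorm (a - xs)).
Proof.
move=> Sa Sxs Fxs0 vs_le Lk0 tau0 t_min y_eps.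
have J_xs_a := J_lip Sxs Sa.
apply: le_trans (le_trans (mulmx_Jhat_le_phi a y xs) _).
  rewrite mulrC; apply: le_trans (sigma_min_perturb _ (y - xs) vs_le).
  by rewrite ler_wpM2r ?enorm_ge0 //; lra.
rewrite addrC lerD ?phi_root_le //.
exact: phi_le_model_bound Sa Sxs Fxs0 Lk0 tau0 t_min y_eps.
Qed.

End OneStep.

Section Scheme1Run.
Variables (R : realType) (n m : nat) (F : 'rV[R]_n -> 'rV[R]_m) (LF L : R).
Variables (x0 : 'rV[R]_n) (x : nat -> 'rV[R]_n) (Lk tau eps : nat -> R).
Hypothesis run : Scheme1 F LF L x0 x Lk tau eps.

Lemma Scheme1_Lk_gt0 k : 0 < L -> L <= LF -> 0 < Lk k.
Proof.
move=> L0 L_LF; have [_ /(_ k)[_ [j ->] _ _ _]] := run.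
have L_start : L <= Lstart L Lk k by case: k => [|k] //=; rewrite le_max lexx orbT.
rewrite lt_min; apply/andP; split; apply: mulr_gt0 => //.
- exact: lt_le_trans L0 L_start.
- exact: lt_le_trans L0 L_LF.
Qed.

Lemma Scheme1_Lk_le k : Lk k <= 2 * LF.
Proof. by have [_ /(_ k)[_ [j ->] _ _ _]] := run; rewrite ge_min lexx orbT. Qed.

Lemma Scheme1_level k : level F (f1hat F x0) (x k).
Proof.
have [x0E step] := run; elim: k => [|k IH]; first by rewrite /level /= x0E.
by have [_ _ _ psi_le f_le] := step k; apply: le_trans f_le (le_trans psi_le IH).
Qed.

Lemma Scheme1_dist_step (S : set 'rV[R]_n) (xs : 'rV[R]_n) (vs : R) k :
  smooth F -> convex_set S ->
  (forall y z, S y -> S z -> enorm (Jhat F z - Jhat F y) <= LF * enorm (z - y)) ->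
  S (x k) -> S xs -> Fhat F xs = 0 -> vs <= sigma_min (Jhat F xs) -> 0 <= Lk k ->
  enorm (x k.+1 - xs) * (vs - LF * enorm (x k - xs)) <=
    LF * enorm (x k - xs) ^+ 2 / 2
    + model_bound LF (tau k) (Lk k) (eps k) (enorm (x k - xs)).
Proof.
move=> sF cS J_lip Sx Sxs Fxs0 vs_le Lk0.
have [_ /(_ k)[[_ tau0] _ [t [t_min x_eps]] _ _]] := run.
exact (dist_root_step_le sF cS J_lip Sx Sxs Fxs0 vs_le Lk0 tau0 t_min x_eps).
Qed.

End Scheme1Run.

Theorem theorem2 (R : realType) (n m : nat) (F : 'rV[R]_n -> 'rV[R]_m)
  (Fset : set 'rV[R]_n) (LF L : R) (x0 : 'rV[R]_n)
  (x : nat -> 'rV[R]_n) (Lk tau eps : nat -> R)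
  (xs : 'rV[R]_n) (vs : R) :
  smooth F ->
  closed Fset -> convex_set Fset -> (exists z, (interior Fset) z) ->
  (forall y z, Fset y -> Fset z ->
     enorm (Jhat F z - Jhat F y) <= LF * enorm (z - y)) ->
  0 < L -> L <= LF ->
  Scheme1 F LF L x0 x Lk tau eps ->
  level F (f1hat F x0) `<=` Fset ->
  (forall k, Fset (x k)) ->
  level F (f1hat F x0) xs -> Fhat F xs = 0 ->
  0 < vs -> vs <= sigma_min (Jhat F xs) ->
  let r k := enorm (x k - xs) in
  let mid k := (3 * LF * r k ^+ 2 / 2
                + Num.sqrt (r k ^+ 2 * (tau k * Lk k + LF ^+ 2 * r k ^+ 2 / 4)
                            + 2 * tau k * eps k))
               / (vs - LF * r k) in
  (* part (i) *)
  (forall alpha : R, 0 < alpha < 1 -> vs > 2 * LF / alpha ->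
   forall k : nat,
     r k < vs / LF - 2 / alpha ->
     0 < tau k ->
     tau k <= (((alpha * (vs - LF * r k) - 3 * LF / 2) ^+ 2 - LF ^+ 2 / 4)
                * r k ^+ 4) / (r k ^+ 2 * Lk k + 2 * eps k) ->
     [/\ level F (f1hat F x0) (x k.+1),
         r k.+1 <= mid k &
         mid k <= alpha * r k ^+ 2]) /\
  (* part (ii) *)
  (~ (exists alpha : R, 0 < alpha < 1 /\ vs > 2 * LF / alpha) ->
   forall c1 c2 : R, 0 < c1 -> 0 <= c2 ->
   (forall k, tau k = c1 * r k ^+ 2 /\ eps k = c2 * r k ^+ 2) ->
   forall k : nat,
     r k <= vs / (5 * LF / 2
                  + Num.sqrt (2 * c1 * LF + LF ^+ 2 / 4 + 2 * c1 * c2)) ->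
     [/\ mid k <= r k,
         r k.+1 <= r k &
         level F (f1hat F x0) (x k.+1)]).
Proof.
move=> sF _ cS _ J_lip L0 L_LF run lvl_S S_x lvl_xs Fxs0 _ vs_le r mid.
have LF0 : 0 < LF := lt_le_trans L0 L_LF.
have Lk_ge0 k : 0 <= Lk k := ltW (Scheme1_Lk_gt0 run k L0 L_LF).
have step k := Scheme1_dist_step run sF cS J_lip (S_x k) (lvl_S _ lvl_xs) Fxs0 vs_le
  (Lk_ge0 k).
split.
- move=> alpha /andP[alpha0 _] _ k r_lt tau0 tau_le.
  have [[eps0 _] _ _ _ _] := run.2 k.
  have [D0 mid_le] :=
    rate_bound_le_quadratic LF0 alpha0 (enorm_ge0 _) tau0 (Lk_ge0 k) eps0 r_lt tau_le.
  split; [exact: Scheme1_level run _ | | exact mid_le].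
  exact (le_rate_bound (ltW LF0) D0 (step k)).
- move=> _ c1 c2 c1_0 c2_0 tau_eps k r_le.
  have [tauE epsE] := tau_eps k.
  have r0 : 0 < r k.
    have [[_ tau0] _ _ _ _] := run.2 k.
    rewrite lt_neqAle enorm_ge0 andbT; apply: contraTneq tau0 => r_eq0.
    by rewrite tauE -r_eq0 expr0n mulr0 ltxx.
  have [D0 mid_le] := rate_bound_le_linear LF0 c1_0 c2_0 r0 (Scheme1_Lk_le run k) r_le.
  rewrite -tauE -epsE in mid_le.
  split; [exact mid_le | | exact: Scheme1_level run _].
  exact: le_trans (le_rate_bound (ltW LF0) D0 (step k)) mid_le.
Qed.
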